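(* Let $H$ be a Hilbert space and consider the Cauchy problem $\dot{u}=A(t)u+F(t,u)$, $t\ge 0$, $u(0)=u_0$, for a function $u(t)$ with values in $H$, where $\dot u := \frac{du}{dt}$. Assume that $A(t)$ is a bounded linear operator in $H$ satisfying $\mathrm{Re}(A(t)u,u)\le -k\|u\|^2$ for all $u\in H$ and all $t\ge 0$, where $k>0$ is a constant, and that $F(t,u)$ is a nonlinear map in $H$ satisfying $\|F(t,u)\|\le c_0\|u\|^p$, where $c_0>0$ and $p>1$ are constants. Then the solution to this problem satisfies the estimate $\|u(t)\|=O(e^{-(k-\epsilon)t})$ as $t\to\infty$. Here $0<\epsilon<k$ can be chosen arbitrarily small if $\|u_0\|$ is sufficiently small.
   Context: Hilbert space $H$; $A(t)$ a bounded linear dissipative operator; the problem is $\dot{u}=A(t)u+F(t,u)+b(t)$, $u(0)=u_0$, with the persistently acting perturbation $b(t)=0$. *)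

From HB Require Import structures.
From mathcomp Require Import all_boot all_order all_algebra.
From mathcomp Require Import all_classical all_reals all_analysis.
Set Implicit Arguments. Unset Strict Implicit. Unset Printing Implicit Defensive.
Import Order.TTheory GRing.Theory Num.Theory.
Import numFieldNormedType.Exports.
Local Open Scope ring_scope.

(* [ip] is a (real) inner product on the normed space V inducing its norm:
   symmetric, bilinear, and (u,u) = ||u||^2.  Together with completeness of V
   this makes V a (real) Hilbert space. *)
Definition is_inner_product (R : realType) (V : normedModType R)
  (ip : V -> V -> R) : Prop :=
  [/\ forall u v, ip u v = ip v u,
      forall a u v w, ip (a *: u + v) w = a * ip u w + ip v w
    & forall u, ip u u = `|u| ^+ 2].

Definition bounded_op (R : realType) (V : normedModType R)
  (B : {linear V -> V}) : Prop :=
  exists M : R, forall u, `|B u| <= M * `|u|.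

From HB Require Import structures.
From mathcomp Require Import all_boot all_order all_algebra.
From mathcomp Require Import all_classical all_reals all_analysis.
From mathcomp Require Import ring lra.
Import Order.TTheory GRing.Theory Num.Theory.
Import numFieldNormedType.Exports.
Local Open Scope classical_set_scope.
Local Open Scope ring_scope.
Set Implicit Arguments. Unset Strict Implicit.

(* Set delta := (eps / c0)^(1/(p-1)).  Inside the ball of radius delta the
   nonlinearity obeys |F t u| <= eps |u|, so (A t u + F t u, u) <= -(k - eps) |u|^2
   and the energy |u t|^2 e^(2 (k - eps) t) is nonincreasing; this gives
   |u t| <= |u0| e^(-(k - eps) t) < delta as long as the solution stays in the
   ball.  A first-exit-time argument shows that it never leaves it. *)

Section InnerProduct.
Variables (R : realType) (H : normedModType R) (ip : H -> H -> R).
Hypothesis hip : is_inner_product ip.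

Lemma ipC u v : ip u v = ip v u. Proof. by case: hip. Qed.

Lemma ipp u : ip u u = `|u| ^+ 2. Proof. by case: hip. Qed.

Lemma ipDl u v w : ip (u + v) w = ip u w + ip v w.
Proof. by case: hip => _ ipDZ _; rewrite -[u]scale1r ipDZ mul1r scale1r. Qed.

Lemma ip0l w : ip 0 w = 0.
Proof. by have := ipDl 0 0 w; rewrite addr0 => ?; lra. Qed.

Lemma ipZl a u w : ip (a *: u) w = a * ip u w.
Proof. by case: hip => _ ipDZ _; rewrite -[a *: u]addr0 ipDZ ip0l addr0. Qed.

Lemma ipNl u w : ip (- u) w = - ip u w.
Proof. by rewrite -scaleN1r ipZl mulN1r. Qed.

Lemma ipDr u v w : ip w (u + v) = ip w u + ip w v.
Proof. by rewrite ipC ipDl !(ipC w). Qed.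

Lemma ipNr u w : ip w (- u) = - ip w u.
Proof. by rewrite ipC ipNl ipC. Qed.

Lemma ipZr a u w : ip w (a *: u) = a * ip w u.
Proof. by rewrite ipC ipZl ipC. Qed.

Lemma ip_polarization u v :
  ip u v = (`|u + v| ^+ 2 - `|u - v| ^+ 2) / 4.
Proof. by rewrite -!ipp !ipDl !ipDr !ipNl !ipNr (ipC v u); field. Qed.

(* Continuity of [ip] is not among the axioms; it follows from polarization. *)
Lemma cvg_ip {T} {F : set_system T} {FF : Filter F} (f g : T -> H) a b :
  f @ F --> a -> g @ F --> b -> (fun x => ip (f x) (g x)) @ F --> ip a b.
Proof.
move=> fa gb; rewrite ip_polarization !expr2.
under eq_fun do rewrite ip_polarization !expr2.
have nD : `|f x + g x| @[x --> F] --> `|a + b| by exact: cvg_norm (cvgD fa gb).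
have nB : `|f x - g x| @[x --> F] --> `|a - b| by exact: cvg_norm (cvgB fa gb).
exact: cvgM (cvgB (cvgM nD nD) (cvgM nB nB)) (cvg_cst _).
Qed.

Lemma ip_le_mul_sqr (e : R) u v :
  0 < e -> `|u| <= e * `|v| -> ip u v <= e * `|v| ^+ 2.
Proof.
move=> e0 uv; have := ipp (u - e *: v).
rewrite !ipDl !ipDr !ipNl !ipNr !ipZl !ipZr !ipp (ipC v u) => expand.
have := sqr_ge0 `|u - e *: v|; rewrite -expand.
have := normr_ge0 u; nra.
Qed.

Lemma is_derive_sqr_norm (u : R -> H) (t : R) (du : H) :
  is_derive t (1 : R) u du ->
  is_derive t (1 : R) (fun s => `|u s| ^+ 2) (2 * ip du (u t)).
Proof.
move=> [du1 du2].
have quotE (h : R) : h^-1 *: (`|u (h *: 1 + t)| ^+ 2 - `|u t| ^+ 2) =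
    ip (h^-1 *: (u (h *: 1 + t) - u t)) (u (h *: 1 + t) + u t).
  rewrite -!ipp ipZl !ipDl !ipDr !ipNl (ipC (u t)) -[LHS]/(h^-1 * _).
  by congr (_ * _); lra.
have uC : u (h *: 1 + t) @[h --> 0^'] --> u t.
  suff : {for 0, continuous (fun h : R => u (h *: 1 + t))}.
    by move=> /continuous_withinNx; rewrite scale0r add0r.
  exact/differentiable_continuous/derivable1_diffP/(derivable1P _ _ _).1.
have quot_cvg : (fun h : R => h^-1 *: (`|u (h *: 1 + t)| ^+ 2 - `|u t| ^+ 2))
    @ 0^' --> 2 * ip du (u t).
  under eq_fun do rewrite quotE.
  have -> : 2 * ip du (u t) = ip du (u t + u t) by rewrite ipDr; lra.
  by apply: cvg_ip; [rewrite -du2; exact: du1 | exact: cvgD uC (cvg_cst _)].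
by split; [apply/cvg_ex; exists (2 * ip du (u t)) | exact: cvg_lim quot_cvg].
Qed.

End InnerProduct.

Definition energy (R : realType) (H : normedModType R) (u : R -> H) (b s : R) :=
  `|u s| ^+ 2 * expR (2 * b * s).

Section Energy.
Variables (R : realType) (H : normedModType R) (ip : H -> H -> R).
Hypothesis hip : is_inner_product ip.

Lemma energy0 (u : R -> H) b : energy u b 0 = `|u 0| ^+ 2.
Proof. by rewrite /energy mulr0 expR0 mulr1. Qed.

Lemma is_derive_energy (u : R -> H) (du : H) (b t : R) :
  is_derive t (1 : R) u du ->
  is_derive t (1 : R) (energy u b)
    (expR (2 * b * t) * (2 * b * `|u t| ^+ 2 + 2 * ip du (u t))).
Proof.
move=> udu.
have lin : is_derive t (1 : R) (fun s : R => 2 * b * s) (2 * b).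
  by rewrite -[X in is_derive _ _ _ X]mulr1; exact: is_deriveZ.
have dexp : is_derive t (1 : R) (fun s : R => expR (2 * b * s))
    (expR (2 * b * t) * (2 * b)).
  exact: (is_derive1_comp (f := expR) (g := fun s : R => 2 * b * s)).
have -> : energy u b = (fun s => `|u s| ^+ 2) * (fun s => expR (2 * b * s)).
  by [].
have -> : expR (2 * b * t) * (2 * b * `|u t| ^+ 2 + 2 * ip du (u t)) =
    `|u t| ^+ 2 *: (expR (2 * b * t) * (2 * b)) +
    expR (2 * b * t) *: (2 * ip du (u t)).
  by rewrite /GRing.scale /=; ring.
exact: is_deriveM (is_derive_sqr_norm hip udu) dexp.
Qed.

Lemma continuous_energy (u : R -> H) b (A : set R) :
  {within A, continuous u} -> {within A, continuous energy u b}.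
Proof.
move=> cu x; apply: cvgM.
  rewrite expr2; exact: cvgM (cvg_norm (cu x)) (cvg_norm (cu x)).
apply: (continuous_subspaceT (f := fun s : R => expR (2 * b * s))) => s.
apply: continuous_comp; last exact: continuous_expR.
exact: cvgM (cvg_cst _) cvg_id.
Qed.

Lemma energy_nonincreasing (u du : R -> H) b T : 0 <= T ->
  {within `[0, T], continuous u} ->
  (forall s, 0 < s < T -> is_derive s (1 : R) u (du s)) ->
  (forall s, 0 < s < T -> ip (du s) (u s) <= - b * `|u s| ^+ 2) ->
  energy u b T <= energy u b 0.
Proof.
move=> T0 cu udu diss.
have denergy s : s \in `]0, T[ -> derivable (energy u b) s 1.
  by rewrite in_itv /= => /udu /(is_derive_energy b) [].
have denergy_le0 s : s \in `]0, T[ -> derive1 (energy u b) s <= 0.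
  rewrite in_itv /= derive1E => sT; have [_ ->] := is_derive_energy b (udu s sT).
  have := diss s sT; have := expR_gt0 (2 * b * s); nra.
by apply: (ler0_derive1_le_cc denergy denergy_le0 (continuous_energy cu));
  rewrite ?in_itv /= ?lexx ?T0.
Qed.

End Energy.

Lemma mul_powR_le_lin (R : realType) (c e p x : R) : 0 < c -> 1 < p -> 0 < e ->
  0 <= x -> x <= powR (e / c) (p - 1)^-1 -> c * powR x p <= e * x.
Proof.
move=> c0 p1 e0 x0 xsmall; have p10 : 0 < p - 1 by rewrite subr_gt0.
have [->|xn0] := eqVneq x 0.
  by rewrite powR0 ?mulr0 // gt_eqF // (lt_trans ltr01).
have xp : powR x (p - 1) <= e / c.
  have := ge0_ler_powR (ltW p10) x0 (powR_ge0 _ _) xsmall.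
  by rewrite -powRrM mulVf ?lt0r_neq0 // powRr1 // ltW // divr_gt0.
rewrite -[p](subrK 1) powRD ?xn0 ?implybT // powRr1 // mulrA.
by apply: ler_wpM2r => //; rewrite mulrC -ler_pdivlMr.
Qed.

Lemma sqr_expR_le_decay (R : realType) (x c b t : R) : 0 <= x -> 0 <= c ->
  x ^+ 2 * expR (2 * b * t) <= c ^+ 2 -> x <= c * expR (- b * t).
Proof.
move=> x0 c0; rewrite -mulrA expRM_natl -exprMn.
rewrite ler_sqr ?nnegrE ?mulr_ge0 ?expR_ge0 // => le_c.
by rewrite mulNr expRN ler_pdivlMr ?expR_gt0.
Qed.

Lemma continuous_stays_below (R : realType) (g : R -> R) (d : R) :
  {within `[0, +oo[, continuous g} -> g 0 < d ->
  (forall T, 0 < T -> (forall s, 0 < s < T -> g s <= d) -> g T < d) ->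
  forall t, 0 <= t -> g t < d.
Proof.
move=> cg g0 barrier t t0; rewrite ltNge; apply/negP => d_le_gt.
pose S := [set s : R | 0 <= s /\ d <= g s].
have S0 : S !=set0 by exists t.
have lbS : lbound S 0 by move=> s [].
have ts0 : 0 <= inf S := lb_le_inf S0 lbS.
have inf_le s : S s -> inf S <= s by apply: ge_inf; exists 0.
set ts := inf S in ts0 inf_le.
have d_le_gts : d <= g ts.
  rewrite leNgt; apply/negP => gts_lt.
  have : g @ within `[0, +oo[ (nbhs ts) --> g ts.
    by move/subspace_continuousP: cg; apply; rewrite /= in_itv /= ts0.
  move=> /cvgr_dist_lt /(_ (d - g ts)); rewrite subr_gt0 => /(_ gts_lt).
  rewrite near_withinE => /nbhs_ballP [r r0 near_ts].
  suff : ts + r <= ts by rewrite gerDl leNgt r0.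
  apply: (@lb_le_inf _ _ (ts + r) S0) => s [s0 ds].
  rewrite leNgt; apply/negP => s_lt.
  have ts_s := inf_le s (conj s0 ds).
  have : ball ts r s by rewrite -ball_normE /= ler0_norm ?subr_le0 //; lra.
  move=> /near_ts; rewrite /= in_itv /= s0 => /(_ isT).
  by have := ler_norm (g s - g ts); rewrite distrC; lra.
have ts_gt0 : 0 < ts.
  by rewrite lt_neqAle ts0 andbT; apply: contraTneq d_le_gts => <-; rewrite -ltNge.
suff : g ts < d by rewrite ltNge d_le_gts.
apply: (barrier ts ts_gt0) => s /andP[s0 s_lt]; rewrite leNgt; apply/negP => ds.
by have := inf_le s (conj (ltW s0) (ltW ds)); rewrite leNgt s_lt.
Qed.

Theorem theorem3 (R : realType) (H : completeNormedModType R)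
  (ip : H -> H -> R) (A : R -> {linear H -> H}) (F : R -> H -> H)
  (k c0 p : R) :
  is_inner_product ip ->
  0 < k -> 0 < c0 -> 1 < p ->
  (forall t, 0 <= t -> bounded_op (A t)) ->
  (forall t u, 0 <= t -> ip (A t u) u <= - k * `|u| ^+ 2) ->
  (forall t u, 0 <= t -> `|F t u| <= c0 * powR `|u| p) ->
  forall eps : R, 0 < eps -> eps < k ->
  exists delta : R, 0 < delta /\
    forall (u0 : H) (u : R -> H),
      `|u0| < delta ->
      u 0 = u0 ->
      {within `[0, +oo[, continuous u} ->
      (forall t : R, 0 < t -> is_derive t (1 : R) u (A t (u t) + F t (u t))) ->
      exists C T : R, forall t, T <= t -> `|u t| <= C * expR (- (k - eps) * t).
Proof.
move=> hip k0 c00 p1 _ Adiss Fbd eps e0 ek.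
set delta := powR (eps / c0) (p - 1)^-1.
have delta0 : 0 < delta by rewrite powR_gt0 // divr_gt0.
exists delta; split=> // u0 u u0_lt u_0 cu du.
have diss t v : 0 <= t -> `|v| <= delta ->
    ip (A t v + F t v) v <= - (k - eps) * `|v| ^+ 2.
  move=> t0 vd; rewrite (ipDl hip).
  have := Fbd t v t0; rewrite -/delta in vd.
  move=> /le_trans /(_ (mul_powR_le_lin c00 p1 e0 (normr_ge0 v) vd)) /ip_le_mul_sqr.
  by move=> /(_ _ hip e0); have := Adiss t v t0; lra.
have decay T : 0 <= T -> (forall s, 0 < s < T -> `|u s| <= delta) ->
    `|u T| <= `|u0| * expR (- (k - eps) * T).
  move=> T0 small; apply: sqr_expR_le_decay => //.
  have cuT : {within `[0, T], continuous u}.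
    by apply: continuous_subspaceW cu => s /=; rewrite !in_itv /= => /andP[->].
  have := energy_nonincreasing hip (b := k - eps) T0 cuT (fun s sT => du s (andP sT).1).
  rewrite energy0 u_0; apply => s sT.
  by apply: diss (small s sT); rewrite ltW // (andP sT).1.
have small t : 0 <= t -> `|u t| < delta.
  apply: (continuous_stays_below (g := fun s => `|u s|)).
  - apply/subspace_continuousP => x x0.
    by apply: cvg_norm; move/subspace_continuousP: cu; apply.
  - by rewrite u_0.
  move=> T T0 /(decay T (ltW T0)) /le_lt_trans; apply; apply: le_lt_trans u0_lt.
  by rewrite ler_piMr // expR_le1 mulNr oppr_le0 mulr_ge0 // ?subr_ge0 ltW.
exists `|u0|, 0 => t t0.
by apply: decay t0 _ => s /andP[s0 _]; exact/ltW/small/ltW.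
Qed.
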